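(* For the name-generation monad $T$ on $[\mathsf{Inj},\mathsf{Set}]$, an object $X$ is sober if and only if it is a nominal set (i.e. the functor $X:\mathsf{Inj}\to\mathsf{Set}$ preserves pullbacks), and the associated sobrification monad $D$ is idempotent.
   Context: $\mathsf{Inj}$ is the category of finite sets and injections. $(TX)(a)=\operatorname{colim}_{b\in\mathsf{Inj}}X(a+b)$, with unit induced by $b=\emptyset$ and multiplication induced by $(a+b)+c\cong a+(b+c)$; a commutative monad on $[\mathsf{Inj},\mathsf{Set}]$. An object $X$ is sober for $T$ if $\eta_X:X\to TX$ is an equalizer of $\eta_{TX},T\eta_X:TX\to TTX$. $\theta_X:DX\to TX$ denotes the equalizer of $\eta_{TX},T\eta_X$; $D$ is a monad with $Dg$ the unique map with $\theta_Z\circ Dg=Tg\circ\theta_Y$, unit $e_X$ with $\theta_X\circ e_X=\eta_X$, and multiplication $m_X$ with $\theta_X\circ m_X=\mu_X\circ T\theta_X\circ\theta_{DX}$; idempotent means the multiplication is an isomorphism. *)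

From Stdlib Require Import Relations ClassicalEpsilon.
From mathcomp Require Import all_boot.



(* The category Inj of finite sets and injections (skeleton: objects are   *)
(* natural numbers n, standing for the finite set 'I_n).                   *)

Record injm (m n : nat) := Injm { injfun :> 'I_m -> 'I_n ; injfunP : injective injfun }.
Arguments Injm {m n} injfun injfunP.
Arguments injfun {m n} _ _.
Arguments injfunP {m n} _ _ _ _.

Definition idm (a : nat) : injm a a := @Injm a a id (@inj_id _).

Definition compm {a b c : nat} (g : injm b c) (f : injm a b) : injm a c :=
  @Injm a c (injfun g \o injfun f) (inj_comp (@injfunP _ _ g) (@injfunP _ _ f)).

Definition sum_fun {a a' b b' : nat} (f : 'I_a -> 'I_a') (g : 'I_b -> 'I_b')
  (u : 'I_a + 'I_b) : 'I_a' + 'I_b' :=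
  match u with inl i => inl (f i) | inr j => inr (g j) end.

Lemma sum_fun_inj {a a' b b' : nat} (f : injm a a') (g : injm b b') :
  injective (sum_fun f g).
Proof.
case=> [i|j] [i'|j'] //= [] E; congr (_ _); [exact: (injfunP f _ _ E)|exact: (injfunP g _ _ E)].
Qed.

Definition summ {a a' b b' : nat} (f : injm a a') (g : injm b b') :
  injm (a + b) (a' + b') :=
  @Injm (a + b) (a' + b') (unsplit \o sum_fun f g \o split)
    (inj_comp (can_inj unsplitK) (inj_comp (@sum_fun_inj a a' b b' f g) (can_inj splitK))).

Definition iotam (a : nat) : injm a (a + 0) :=
  @Injm a (a + 0) (@lshift a 0) (@lshift_inj a 0).

Definition assocm (a b c : nat) : injm (a + b + c) (a + (b + c)) :=
  @Injm _ _ (cast_ord (esym (addnA a b c))) (@cast_ord_inj _ _ _).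

Record prefun := PreFun {
  ob :> nat -> Type ;
  fmap : forall m n : nat, injm m n -> ob m -> ob n }.
Arguments fmap p {m n} _ _.

Definition is_functor (X : prefun) : Prop :=
  (forall a (x : X a), fmap X (idm a) x = x) /\
  (forall a b c (f : injm a b) (g : injm b c) (x : X a),
      fmap X (compm g f) x = fmap X g (fmap X f x)).

Definition natural (X Y : prefun) (h : forall a, X a -> Y a) : Prop :=
  forall a b (f : injm a b) (x : X a), h b (fmap X f x) = fmap Y f (h a x).

Definition is_iso {X Y : prefun} (h : forall a, X a -> Y a) : Prop :=
  natural X Y h /\
  exists k : forall a, Y a -> X a,
    natural Y X k /\ (forall a x, k a (h a x) = x) /\ (forall a y, h a (k a y) = y).

(* The name-generation monad T : (TX)(a) = colim_{b in Inj} X(a + b).      *)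
(* The colimit in Set is the quotient of the disjoint union               *)
(* Sigma_b X(a+b) by the equivalence relation generated by                 *)
(* (b, x) ~ (b', X(id_a + f) x) for f : b -> b'.                           *)

Definition Tpre (X : prefun) (a : nat) : Type := {b : nat & X (a + b)}.

Definition Tstep {X : prefun} {a : nat} (p q : Tpre X a) : Prop :=
  exists f : injm (projT1 p) (projT1 q),
    fmap X (summ (idm a) f) (projT2 p) = projT2 q.

Definition Tequiv {X : prefun} {a : nat} : relation (Tpre X a) :=
  clos_refl_sym_trans _ (@Tstep X a).

Definition Tob (X : prefun) (a : nat) : Type :=
  {P : Tpre X a -> Prop | exists p, P = Tequiv p}.

Definition Tcls {X : prefun} {a : nat} (p : Tpre X a) : Tob X a :=
  exist _ (Tequiv p) (ex_intro _ p erefl).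

Definition Trep {X : prefun} {a : nat} (q : Tob X a) : Tpre X a :=
  proj1_sig (constructive_indefinite_description _ (proj2_sig q)).

Definition Tmap (X : prefun) {a a' : nat} (g : injm a a') (q : Tob X a) : Tob X a' :=
  let p := Trep q in
  @Tcls X a' (existT _ (projT1 p) (fmap X (summ g (idm (projT1 p))) (projT2 p))).

Definition T (X : prefun) : prefun := @PreFun (Tob X) (@Tmap X).

Definition Tarr {X Y : prefun} (h : forall a, X a -> Y a) (a : nat) (q : T X a) : T Y a :=
  let p := Trep q in @Tcls Y a (existT _ (projT1 p) (h _ (projT2 p))).

(* unit, induced by b = empty set *)
Definition eta {X : prefun} (a : nat) (x : X a) : T X a :=
  @Tcls X a (existT _ 0 (fmap X (iotam a) x)).

Definition mu {X : prefun} {a : nat} (q : T (T X) a) : T X a :=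
  let p := Trep q in
  let r := Trep (projT2 p) in
  @Tcls X a (existT _ (projT1 p + projT1 r)
                    (fmap X (assocm a (projT1 p) (projT1 r)) (projT2 r))).

Definition is_equalizer {E Y W : prefun} (e : forall a, E a -> Y a)
  (f g : forall a, Y a -> W a) : Prop :=
  natural E Y e /\
  (forall a x, f a (e a x) = g a (e a x)) /\
  (forall Z : prefun, is_functor Z ->
   forall h : forall a, Z a -> Y a, natural Z Y h ->
   (forall a z, f a (h a z) = g a (h a z)) ->
   exists u : forall a, Z a -> E a,
     natural Z E u /\ (forall a z, e a (u a z) = h a z) /\
     (forall u' : forall a, Z a -> E a, natural Z E u' ->
        (forall a z, e a (u' a z) = h a z) -> forall a z, u' a z = u a z)).

Definition sober (X : prefun) : Prop :=
  is_equalizer (eta (X := X)) (eta (X := T X)) (Tarr (eta (X := X))).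

Definition is_pb_Inj {p a b c : nat} (f : injm a c) (g : injm b c)
  (h : injm p a) (k : injm p b) : Prop :=
  (forall i, f (h i) = g (k i)) /\
  forall (d : nat) (h' : injm d a) (k' : injm d b),
    (forall i, f (h' i) = g (k' i)) ->
    exists u : injm d p,
      (forall i, h (u i) = h' i) /\ (forall i, k (u i) = k' i) /\
      (forall u' : injm d p, (forall i, h (u' i) = h' i) ->
          (forall i, k (u' i) = k' i) -> forall i, u' i = u i).

Definition is_pb_Set {P A B C : Type} (f : A -> C) (g : B -> C)
  (h : P -> A) (k : P -> B) : Prop :=
  (forall x, f (h x) = g (k x)) /\
  forall (D : Type) (h' : D -> A) (k' : D -> B),
    (forall d, f (h' d) = g (k' d)) ->
    exists! u : D -> P, (forall d, h (u d) = h' d) /\ (forall d, k (u d) = k' d).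

Definition nominal (X : prefun) : Prop :=
  forall (p a b c : nat) (f : injm a c) (g : injm b c) (h : injm p a) (k : injm p b),
    is_pb_Inj f g h k ->
    is_pb_Set (fmap X f) (fmap X g) (fmap X h) (fmap X k).

From Stdlib Require Import Relations ClassicalEpsilon.
From Stdlib Require Import FunctionalExtensionality ProofIrrelevance PropExtensionality.
From mathcomp Require Import all_boot.

(* Representatives of (T X)(a) are pairs [b, x] with x in X (a + b), and two of
   them are identified exactly when they become equal under injections into a
   common set that agree on a. Unfolding the equalizer of eta_(T X) and T eta_X
   with this description, [b, y] lies in it iff y is fixed by a fork: two
   injections that agree on a and send b to disjoint places. Hence X is sober
   iff X preserves monos and every element fixed by a fork comes from X a; as
   pullbacks in Inj are intersections, this is exactly pullback preservation.
   T X preserves monos and has the fork property, both properties pass to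
   equalizers, so D X is sober. The multiplication of D is then the comparison
   between two equalizers of the same parallel pair (e_(D X) and theta_(D X)),
   hence an isomorphism. *)

(** * Injections *)

Lemma injm_eq m n (f g : injm m n) : f =1 g -> f = g.
Proof.
case: f g => [f fP] [g gP] /= /functional_extensionality fg; subst g.
by rewrite (proof_irrelevance _ fP gP).
Qed.

Lemma injm_leq {m n} (f : injm m n) : m <= n.
Proof. exact: inj_leq (injfunP f). Qed.

Lemma lshift_neq_rshift m n (i : 'I_m) (j : 'I_n) : lshift n i <> rshift m j.
Proof. by move/eqP; rewrite eq_lrshift. Qed.

Lemma widen_ord_inj m n (le_mn : m <= n) : injective (widen_ord le_mn).
Proof. by move=> i j /(congr1 val) /= /val_inj. Qed.

Definition injm0 n : injm 0 n := Injm (widen_ord (leq0n n)) (@widen_ord_inj 0 n _).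
Definition lshm m n : injm m (m + n) := Injm (@lshift m n) (@lshift_inj m n).
Definition rshm m n : injm n (m + n) := Injm (@rshift m n) (@rshift_inj m n).
Definition pointm {n} (i : 'I_n) : injm 1 n :=
  Injm (fun=> i) (fun x y _ => etrans (ord1 x) (esym (ord1 y))).

Lemma compmE m n k (g : injm n k) (f : injm m n) i : compm g f i = g (f i).
Proof. by []. Qed.
Lemma idmE m i : idm m i = i.
Proof. by []. Qed.
Lemma iotamE a i : iotam a i = lshift 0 i.
Proof. by []. Qed.
Lemma lshmE m n i : lshm m n i = lshift n i.
Proof. by []. Qed.
Lemma rshmE m n j : rshm m n j = rshift m j.
Proof. by []. Qed.

Lemma summ_lshift a a' b b' (f : injm a a') (g : injm b b') i :
  summ f g (lshift b i) = lshift b' (f i).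
Proof. by rewrite /= (unsplitK (inl _ i)). Qed.
Lemma summ_rshift a a' b b' (f : injm a a') (g : injm b b') j :
  summ f g (rshift a j) = rshift a' (g j).
Proof. by rewrite /= (unsplitK (inr _ j)). Qed.

Lemma assocm_lshift2 a b c (i : 'I_a) :
  assocm a b c (lshift c (lshift b i)) = lshift (b + c) i.
Proof. exact: val_inj. Qed.
Lemma assocm_lshift_rshift a b c (j : 'I_b) :
  assocm a b c (lshift c (rshift a j)) = rshift a (lshift c j).
Proof. exact: val_inj. Qed.
Lemma assocm_rshift a b c (k : 'I_c) :
  assocm a b c (rshift (a + b) k) = rshift a (rshift b k).
Proof. by apply: val_inj; rewrite /= addnA. Qed.

Section Copair.
Context {m n k : nat} {f : injm m k} {g : injm n k}.
Hypothesis fg_disjoint : forall i j, f i <> g j.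

Definition copair_fun (u : 'I_(m + n)) : 'I_k :=
  match split u with inl i => f i | inr j => g j end.

Lemma copair_fun_inj : injective copair_fun.
Proof.
move=> u v; rewrite /copair_fun.
case: split_ordP => [i ->|j ->]; case: split_ordP => [i' ->|j' ->].
- by move/(injfunP f) ->.
- by move/fg_disjoint.
- by move/esym/fg_disjoint.
- by move/(injfunP g) ->.
Qed.

Definition copair : injm (m + n) k := Injm copair_fun copair_fun_inj.

Lemma copair_lshift i : copair (lshift n i) = f i.
Proof. by rewrite /= /copair_fun (unsplitK (inl _ i)). Qed.
Lemma copair_rshift j : copair (rshift m j) = g j.
Proof. by rewrite /= /copair_fun (unsplitK (inr _ j)). Qed.

End Copair.

Definition injmE := (compmE, idmE, iotamE, lshmE, rshmE, summ_lshift, summ_rshift,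
  assocm_lshift2, assocm_lshift_rshift, assocm_rshift, @copair_lshift, @copair_rshift).

Lemma card_leq_inj (A B : finType) : #|A| <= #|B| -> exists h : A -> B, injective h.
Proof.
move=> le_AB; exists (fun x => enum_val (widen_ord le_AB (enum_rank x))).
by move=> x y /enum_val_inj /widen_ord_inj /enum_rank_inj.
Qed.

Lemma injm_extend_in {m n} {P : pred 'I_m} {f : 'I_m -> 'I_n} :
  {in P &, injective f} -> m <= n ->
  exists g : injm m n, forall i, P i -> g i = f i.
Proof.
move=> f_inj le_mn; pose fP := [set f i | i in P].
have : #|{: {i : 'I_m | ~~ P i}}| <= #|{: {j : 'I_n | j \notin fP}}|.
  rewrite !card_sig -(leq_add2l #|P|).
  have /= -> := cardC P; rewrite -(card_in_imset f_inj) -/fP.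
  by have /= -> := cardC fP; rewrite !card_ord.
case/card_leq_inj => h h_inj.
pose g i := if insub i is Some s then val (h s) else f i.
have g_inj : injective g.
  move=> i1 i2; rewrite /g.
  case: insubP => [s1 _ <-|]; case: insubP => [s2 _ <-|] //.
  - by move/val_inj/h_inj ->.
  - rewrite negbK => P2 E; have := valP (h s1).
    by rewrite E imset_f.
  - rewrite negbK => P1 E; have := valP (h s2).
    by rewrite -E imset_f.
  - by rewrite !negbK => P2 P1; apply: f_inj.
exists (Injm g g_inj) => i Pi /=.
by rewrite /g; case: insubP => // s; rewrite Pi.
Qed.

Lemma injm_extend {k m n} (v : injm k m) (u : injm k n) : m <= n ->
  exists g : injm m n, forall i, g (v i) = u i.
Proof.
move=> le_mn; pose P := [pred j | [exists i, v i == j]].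
pose f j := if [pick i | v i == j] is Some i then u i else widen_ord le_mn j.
have f_v i : f (v i) = u i.
  rewrite /f; case: pickP => [i' /eqP /(injfunP v) -> //|/(_ i)].
  by rewrite eqxx.
have f_inj : {in P &, injective f}.
  move=> _ _ /existsP [i1 /eqP <-] /existsP [i2 /eqP <-].
  by rewrite !f_v => /(injfunP u) ->.
have [g g_f] := injm_extend_in f_inj le_mn.
by exists g => i; rewrite g_f ?f_v //; apply/existsP; exists i.
Qed.

Lemma injm_inverse {m n} (f : injm m n) : n <= m ->
  exists g : injm n m, cancel f g /\ cancel g f.
Proof.
move=> le_nm; have [|g fK gK] := @inj_card_bij _ _ f (injfunP f).
  by rewrite !card_ord.
by exists (Injm g (can_inj gK)).
Qed.

Lemma injm_fix_lshift {a b c} (phi : injm (a + b) (a + c)) :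
  (forall i, phi (lshift b i) = lshift c i) ->
  exists g : injm b c, phi =1 summ (idm a) g.
Proof.
move=> phi_l.
have : forall j, exists k, phi (rshift a j) = rshift a k.
  move=> j; case: (split_ordP (phi (rshift a j))) => [i|k ->]; last by exists k.
  by rewrite -phi_l => /(injfunP phi) /esym /lshift_neq_rshift.
case/fin_all_exists => g phi_r.
have g_inj : injective g.
  by move=> j1 j2 g12; apply/(@rshift_inj a)/(injfunP phi); rewrite !phi_r g12.
exists (Injm g g_inj) => u.
by case: (split_ordP u) => [i ->|j ->]; rewrite !injmE ?phi_l ?phi_r.
Qed.

Lemma fmap_ext (X : prefun) {m n} {f g : injm m n} {x} : f =1 g -> fmap X f x = fmap X g x.
Proof. by move/injm_eq ->. Qed.

Section Functor.
Context {X : prefun} (HX : is_functor X).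

Lemma fmap_id {a} (x : X a) : fmap X (idm a) x = x.
Proof. exact: (proj1 HX). Qed.

Lemma fmap_comp {a b c} (f : injm a b) (g : injm b c) (x : X a) :
  fmap X (compm g f) x = fmap X g (fmap X f x).
Proof. exact: (proj2 HX). Qed.

Lemma fmap_idE {a} (f : injm a a) x : f =1 id -> fmap X f x = x.
Proof. by move=> f_id; rewrite (@fmap_ext X _ _ f (idm a)) ?fmap_id. Qed.

Lemma fmap_compE {a b c} (f : injm a b) (g : injm b c) (h : injm a c) x :
  (forall i, h i = g (f i)) -> fmap X h x = fmap X g (fmap X f x).
Proof. by move=> hE; rewrite -fmap_comp; apply: fmap_ext. Qed.

Lemma fmap_square {a b b' c} (f : injm a b) (g : injm b c)
    (f' : injm a b') (g' : injm b' c) x :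
  (forall i, g (f i) = g' (f' i)) -> fmap X g (fmap X f x) = fmap X g' (fmap X f' x).
Proof. by move=> sq; rewrite -!fmap_comp; apply: fmap_ext. Qed.

End Functor.

(** * The name-generation monad *)

Definition tpair {X : prefun} {a b : nat} (x : X (a + b)) : Tpre X a := existT _ b x.

Section Quotient.
Context {X : prefun} {a : nat}.

Lemma Tcls_eq_equiv (p q : Tpre X a) : Tcls p = Tcls q <-> Tequiv p q.
Proof.
split=> [/(congr1 (@proj1_sig _ _)) /= -> | pq]; first exact: rst_refl.
apply: subset_eq_compat; apply: functional_extensionality => r.
apply: propositional_extensionality; split; last exact: rst_trans pq.
exact: rst_trans (rst_sym _ _ _ _ pq).
Qed.

Lemma TrepK (t : Tob X a) : Tcls (Trep t) = t.
Proof.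
case: t => P P_cls; apply: subset_eq_compat; rewrite /Trep /=.
by case: constructive_indefinite_description => p /= ->.
Qed.

Lemma Tcls_surj (t : Tob X a) : exists b (x : X (a + b)), t = Tcls (tpair x).
Proof. by rewrite -(TrepK t); case: (Trep t) => b x; exists b, x. Qed.

Lemma Tequiv_lift {Z : Type} {F : Tpre X a -> Z} :
  (forall p q, Tstep p q -> F p = F q) -> forall p, F (Trep (Tcls p)) = F p.
Proof.
move=> F_step p; have : Tequiv (Trep (Tcls p)) p by apply/Tcls_eq_equiv; rewrite TrepK.
move: (Trep _) => p'.
by elim=> [q r /F_step | q | q r _ -> | q r s _ -> _ ->].
Qed.

Lemma Tcls_summ {b b'} (f : injm b b') (x : X (a + b)) :
  Tcls (tpair (fmap X (summ (idm a) f) x)) = Tcls (tpair x).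
Proof. by apply/Tcls_eq_equiv/rst_sym/rst_step; exists f. Qed.

(* Any span of injections completes to a commuting square, so the equivalence
   generated by [Tstep] is just joinability. *)
Definition Tjoin (p q : Tpre X a) : Prop :=
  exists e (phi : injm (a + projT1 p) e) (psi : injm (a + projT1 q) e),
    (forall i, phi (lshift _ i) = psi (lshift _ i)) /\
    fmap X phi (projT2 p) = fmap X psi (projT2 q).

Hypothesis HX : is_functor X.

Lemma Tequiv_join p q : Tequiv p q -> Tjoin p q.
Proof.
elim=> {p q} [[b x] [b' y] [f /= <-] | [b x] | p q _ [e [phi [psi [l_eq xy]]]] |
  p q r _ [e1 [phi1 [psi1 [l1 xy]]]] _ [e2 [phi2 [psi2 [l2 yz]]]]].
- by exists (a + b'), (summ (idm a) f), (idm _); split=> [i|]; rewrite ?injmE ?fmap_id.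
- by exists (a + b), (idm _), (idm _).
- by exists e, psi, phi; split=> [i|]; rewrite ?l_eq ?xy.
- have [g g_phi2] := injm_extend phi2 (compm (lshm e1 e2) psi1) (leq_addl _ _).
  exists (e1 + e2), (compm (lshm e1 e2) phi1), (compm g psi2); split=> [i|].
    by rewrite !injmE l1 -l2 g_phi2.
  rewrite !fmap_comp // xy -yz -!fmap_comp //.
  by apply: fmap_ext => i /=; rewrite g_phi2.
Qed.

Lemma Tjoin_equiv p q : Tjoin p q -> Tequiv p q.
Proof.
case: p q => [b x] [b' y] [e [/= phi [psi [l_eq xy]]]].
have [k k_l] := injm_extend (compm phi (lshm a b)) (lshm a e) (leq_addl _ _).
have [g1 g1E] := injm_fix_lshift (compm k phi) k_l.
have k_l' i : compm k psi (lshift b' i) = lshift e i by rewrite /= -l_eq; apply: k_l.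
have [g2 g2E] := injm_fix_lshift (compm k psi) k_l'.
apply: (rst_trans _ _ _ (tpair (fmap X (summ (idm a) g1) x))).
  by apply: rst_step; exists g1.
apply: rst_sym; apply: (rst_trans _ _ _ (tpair (fmap X (summ (idm a) g2) y))).
  by apply: rst_step; exists g2.
by rewrite -(fmap_ext X g1E) -(fmap_ext X g2E) !fmap_comp // xy; apply: rst_refl.
Qed.

Lemma Tcls_eqP {p q} : Tcls p = Tcls q <-> Tjoin p q.
Proof.
rewrite Tcls_eq_equiv; split; [exact: Tequiv_join | exact: Tjoin_equiv].
Qed.

End Quotient.

Lemma Tarr_cls {X Y : prefun} (h : forall a, X a -> Y a) : natural X Y h ->
  forall a b (x : X (a + b)), Tarr h a (Tcls (tpair x)) = Tcls (tpair (h _ x)).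
Proof.
move=> h_nat a b x; pose F (p : Tpre X a) := Tcls (tpair (h _ (projT2 p))) : T Y a.
have F_step p q : Tstep p q -> F p = F q.
  by case: p q => [c y] [c' z] [f /= <-]; rewrite /F /= h_nat Tcls_summ.
exact (Tequiv_lift F_step (tpair x)).
Qed.

Lemma Tarr_eta {X Y : prefun} {h : forall a, X a -> Y a} :
  natural X Y h -> forall a x, Tarr h a (eta a x) = eta a (h a x).
Proof. by move=> h_nat a x; rewrite /eta Tarr_cls // h_nat. Qed.

Section Monad.
Context {X : prefun} (HX : is_functor X).

Lemma Tmap_cls {a a'} (g : injm a a') {b} (x : X (a + b)) :
  Tmap X g (Tcls (tpair x)) = Tcls (tpair (fmap X (summ g (idm b)) x)).
Proof.
pose F (p : Tpre X a) := Tcls (tpair (fmap X (summ g (idm (projT1 p))) (projT2 p))) : T X a'.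
have F_step p q : Tstep p q -> F p = F q.
  case: p q => [c y] [c' z] [f /= <-]; rewrite /F /= -(Tcls_summ f).
  congr (Tcls (tpair _)); apply: fmap_square => // u.
  by case: (split_ordP u) => [i ->|j ->]; rewrite !injmE.
exact (Tequiv_lift F_step (tpair x)).
Qed.

Lemma T_functor : is_functor (T X).
Proof.
split=> [a t | a b c f g t]; have [d [x ->]] := Tcls_surj t; rewrite /= !Tmap_cls.
  by rewrite fmap_idE // => u; case: (split_ordP u) => [i ->|j ->]; rewrite !injmE.
congr (Tcls (tpair _)); apply: fmap_compE => // u.
by case: (split_ordP u) => [i ->|j ->]; rewrite !injmE.
Qed.

Lemma Tmap_inj {a a'} (f : injm a a') : injective (Tmap X f).
Proof.
move=> t1 t2; have [b [x ->]] := Tcls_surj t1; have [b' [x' ->]] := Tcls_surj t2.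
rewrite !Tmap_cls => /(Tcls_eqP HX) [e [phi [psi [l_eq xx']]]]; apply/(Tcls_eqP HX).
exists e, (compm phi (summ f (idm b))), (compm psi (summ f (idm b'))).
by split=> [i|]; rewrite ?injmE ?l_eq // !fmap_comp.
Qed.

Lemma eta_natural : natural X (T X) (@eta X).
Proof.
move=> a b f x; rewrite /= Tmap_cls; congr (Tcls (tpair _)).
by apply: fmap_square => // i; rewrite !injmE.
Qed.

Lemma eta_equalizes {a} (x : X a) :
  eta (X := T X) a (eta a x) = Tarr (eta (X := X)) a (eta a x).
Proof. by rewrite Tarr_eta //; apply: eta_natural. Qed.

Lemma mu_cls a c d (x : X (a + c + d)) :
  mu (Tcls (@tpair (T X) a c (Tcls (tpair x)))) = Tcls (tpair (fmap X (assocm a c d) x)).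
Proof.
pose G c (r : Tpre X (a + c)) :=
  Tcls (tpair (fmap X (assocm a c (projT1 r)) (projT2 r))) : T X a.
have G_step c' r s : Tstep r s -> G c' r = G c' s.
  case: r s => [d1 y] [d2 z] [f /= <-]; rewrite /G /= -(Tcls_summ (summ (idm c') f)).
  congr (Tcls (tpair _)); apply: fmap_square => // u.
  case: (split_ordP u) => [w ->|k ->]; rewrite ?injmE //.
  by case: (split_ordP w) => [i ->|j ->]; rewrite !injmE.
pose F (p : Tpre (T X) a) := G _ (Trep (projT2 p)).
have F_step p q : Tstep p q -> F p = F q.
  case: p q => [c1 t] [c2 t'] [f /= <-]; have [d1 [y ->]] := Tcls_surj t.
  rewrite /F /= Tmap_cls (Tequiv_lift (G_step _)) (Tequiv_lift (G_step _)) /G /=.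
  rewrite -(Tcls_summ (summ f (idm d1))); congr (Tcls (tpair _)).
  apply: fmap_square => // u; case: (split_ordP u) => [w ->|k ->]; rewrite ?injmE //.
  by case: (split_ordP w) => [i ->|j ->]; rewrite !injmE.
exact (etrans (Tequiv_lift F_step (@tpair (T X) a c (Tcls (tpair x))))
              (Tequiv_lift (G_step c) (tpair x))).
Qed.

Lemma mu_eta {a} (t : T X a) : mu (eta (X := T X) a t) = t.
Proof.
have [d [x ->]] := Tcls_surj t; rewrite /eta /= Tmap_cls mu_cls.
rewrite -[RHS](Tcls_summ (idm d : injm d (0 + d))); congr (Tcls (tpair _)).
rewrite -fmap_comp //; apply: fmap_ext => u; apply: val_inj.
by case: (split_ordP u) => [i ->|j ->]; rewrite !injmE.
Qed.

End Monad.

Lemma Tarr_natural {X Y : prefun} (HX : is_functor X) (HY : is_functor Y)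
  (h : forall a, X a -> Y a) : natural X Y h -> natural (T X) (T Y) (Tarr h).
Proof.
move=> h_nat a b f t; have [d [x ->]] := Tcls_surj t.
by rewrite /= Tmap_cls // !Tarr_cls // Tmap_cls // h_nat.
Qed.

(** * Equalizers *)

Definition Hom (a : nat) : prefun :=
  @PreFun (injm a) (fun m n (f : injm m n) (g : injm a m) => compm f g).

Lemma Hom_functor a : is_functor (Hom a).
Proof. by split=> *; apply: injm_eq. Qed.

Section Equalizer.
Context {E Y W : prefun} {e : forall a, E a -> Y a} {f g : forall a, Y a -> W a}.

Lemma pointwise_equalizer :
  natural E Y e -> (forall a, injective (e a)) ->
  (forall a x, f a (e a x) = g a (e a x)) ->
  (forall a y, f a y = g a y -> exists x, e a x = y) -> is_equalizer e f g.
Proof.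
move=> e_nat e_inj e_eq e_onto; do 2!split=> //.
move=> Z _ h h_nat h_eq.
pose u a z := proj1_sig (constructive_indefinite_description _ (e_onto a (h a z) (h_eq a z))).
have u_e a z : e a (u a z) = h a z by rewrite /u; case: constructive_indefinite_description.
exists u; split=> [a b k z|]; first by apply: e_inj; rewrite e_nat !u_e h_nat.
by split=> // u' _ u'_e a z; apply: e_inj; rewrite u_e u'_e.
Qed.

Hypothesis e_equalizer : is_equalizer e f g.

(* Both lemmas test the universal property against the representable [Hom a]. *)
Lemma equalizer_inj : is_functor E -> forall a, injective (e a).
Proof.
case: e_equalizer => e_nat [e_eq univ] HE a x1 x2 e12.
pose h (x : E a) n (k : injm a n) := fmap E k x.
have h_nat x : natural (Hom a) E (h x) by move=> m n k l; apply: (fmap_comp HE).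
have eh_nat x : natural (Hom a) Y (fun n k => e n (h x n k)).
  by move=> m n k l; rewrite /= -e_nat -h_nat.
have [u [_ [u_e u_uniq]]] := univ _ (Hom_functor a) _ (eh_nat x1) (fun n k => e_eq n _).
have same_e n k : e n (h x2 n k) = e n (h x1 n k) by rewrite /h !e_nat e12.
have := u_uniq _ (h_nat x1) (fun _ _ => erefl) a (idm a).
have := u_uniq _ (h_nat x2) same_e a (idm a).
by rewrite /h !(fmap_id HE) => -> ->.
Qed.

Lemma equalizer_surj : is_functor Y -> natural Y W f -> natural Y W g ->
  forall a y, f a y = g a y -> exists x, e a x = y.
Proof.
case: e_equalizer => _ [_ univ] HY f_nat g_nat a y fgy.
have h_nat : natural (Hom a) Y (fun n k => fmap Y k y).
  by move=> m n k l; apply: (fmap_comp HY).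
have [n k | u [_ [u_e _]]] := univ _ (Hom_functor a) _ h_nat; first by rewrite f_nat g_nat fgy.
by exists (u a (idm a)); rewrite u_e fmap_id.
Qed.

End Equalizer.

Lemma equalizer_iso {E1 E2 Y W : prefun} {e1 : forall a, E1 a -> Y a}
    {e2 : forall a, E2 a -> Y a} {f g : forall a, Y a -> W a} :
  is_functor E1 -> is_functor E2 -> is_equalizer e1 f g -> is_equalizer e2 f g ->
  exists m : forall a, E1 a -> E2 a,
    natural E1 E2 m /\ (forall a z, e2 a (m a z) = e1 a z) /\ is_iso m.
Proof.
move=> HE1 HE2 eq1 eq2; have [[e1_nat [e1_eq univ1]] [e2_nat [e2_eq univ2]]] := (eq1, eq2).
have [m [m_nat [m_e _]]] := univ2 E1 HE1 e1 e1_nat e1_eq.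
have [k [k_nat [k_e _]]] := univ1 E2 HE2 e2 e2_nat e2_eq.
exists m; do 3!split=> //; exists k; do 2!split=> //.
- by move=> a z; apply: (equalizer_inj eq1 HE1); rewrite k_e m_e.
- by move=> a z; apply: (equalizer_inj eq2 HE2); rewrite m_e k_e.
Qed.

(** * Sober objects *)

(* In a nominal set this says exactly that [a] supports [y]. *)
Definition fork_fixed (Y : prefun) a b (y : Y (a + b)) : Prop :=
  exists e (Phi Psi : injm (a + b) e),
    (forall i, Phi (lshift b i) = Psi (lshift b i)) /\
    (forall j j', Phi (rshift a j) <> Psi (rshift a j')) /\
    fmap Y Phi y = fmap Y Psi y.

Definition preserves_mono (X : prefun) : Prop :=
  forall m n (f : injm m n), injective (fmap X f).

Definition fork_supported (X : prefun) : Prop :=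
  forall a b (y : X (a + b)), fork_fixed X a b y -> exists x, y = fmap X (lshm a b) x.

Definition eta_equalized (Y : prefun) a (t : T Y a) : Prop :=
  eta (X := T Y) a t = Tarr (eta (X := Y)) a t.

Section Sober.
Context {X : prefun} (HX : is_functor X).

Lemma eta_equalized_fork a b (y : X (a + b)) :
  eta_equalized X a (Tcls (tpair y)) -> fork_fixed X a b y.
Proof.
rewrite /eta_equalized {1}/eta /= Tmap_cls // Tarr_cls; last exact: eta_natural.
move=> /(Tcls_eqP (T_functor HX)) [e [/= phi [psi [l_eq]]]].
rewrite !Tmap_cls // => /(Tcls_eqP HX) [e' [/= phi' [psi' [l_eq' yy]]]].
exists e', (compm phi' (compm (summ phi (idm b)) (summ (iotam a) (idm b)))),
  (compm psi' (compm (summ psi (idm 0)) (iotam (a + b)))).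
split; [|split] => [i|j j'|]; rewrite ?injmE.
- by rewrite l_eq l_eq'.
- by rewrite -l_eq' => /(injfunP phi') /esym /lshift_neq_rshift.
- by rewrite !(fmap_comp HX).
Qed.

Lemma fork_eta_equalized a b (y : X (a + b)) :
  fork_fixed X a b y -> eta_equalized X a (Tcls (tpair y)).
Proof.
move=> [e [Phi [Psi [l_eq [r_disj yy]]]]].
rewrite /eta_equalized {1}/eta /= Tmap_cls // Tarr_cls; last exact: eta_natural.
rewrite /eta -(Tcls_summ (injm0 b)); congr (Tcls (tpair _)).
rewrite /= Tmap_cls //; apply/(Tcls_eqP HX).
have disj u j : Psi u <> compm Phi (rshm a b) j.
  rewrite !injmE; case: (split_ordP u) => [i ->|j' ->].
  + by rewrite -l_eq => /(injfunP Phi) /lshift_neq_rshift.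
  + by move/esym; apply: r_disj.
pose phi := copair disj.
exists e, phi, (compm phi (summ (idm (a + b)) (injm0 b))); split=> [u|/=].
  by rewrite !injmE.
have phi_Phi : compm (compm phi (summ (summ (idm a) (injm0 b)) (idm b)))
    (summ (iotam a) (idm b)) =1 Phi.
  by move=> u; case: (split_ordP u) => [i ->|j ->]; rewrite !injmE ?l_eq.
have phi_Psi : compm (compm phi (summ (idm (a + b)) (injm0 b))) (iotam (a + b)) =1 Psi.
  by move=> u; rewrite !injmE.
by rewrite -!(fmap_comp HX) (fmap_ext X phi_Phi) (fmap_ext X phi_Psi).
Qed.

Lemma eta_cls_lshift a b (x : X a) : Tcls (tpair (fmap X (lshm a b) x)) = eta a x.
Proof.
rewrite /eta -(Tcls_summ (injm0 b)); congr (Tcls (tpair _)).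
by apply: (fmap_compE HX) => i; rewrite !injmE.
Qed.

Lemma eta_inj_preserves_mono : (forall a, injective (eta (X := X) a)) <-> preserves_mono X.
Proof.
split=> [eta_inj m n f x x' fxx' | mono a x x'].
  apply: eta_inj; apply: (Tmap_inj HX f).
  change (fmap (T X) f (eta m x) = fmap (T X) f (eta m x')).
  by rewrite -!(eta_natural HX) fxx'.
move/(Tcls_eqP HX) => [e [/= phi [psi [l_eq xx']]]].
have psi_phi : psi = phi.
  by apply: injm_eq => u; case: (split_ordP u) => [i ->|[]] //; rewrite l_eq.
by move: xx'; rewrite psi_phi => /mono /mono.
Qed.

Lemma Tcls_eq_eta : preserves_mono X ->
  forall a b (y : X (a + b)) x, Tcls (tpair y) = eta a x -> y = fmap X (lshm a b) x.
Proof.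
move=> mono a b y x; rewrite -(eta_cls_lshift _ b).
move=> /(Tcls_eqP HX) [e [/= phi [psi [l_eq yx]]]].
apply: (mono _ _ phi); rewrite yx; apply: (fmap_square HX) => i.
by rewrite !injmE l_eq.
Qed.

Lemma sober_char : sober X <-> preserves_mono X /\ fork_supported X.
Proof.
have TX := T_functor HX.
split=> [sob | [mono fork]].
  have mono : preserves_mono X by apply/eta_inj_preserves_mono; apply: equalizer_inj sob HX.
  split=> // a b y /fork_eta_equalized eq_y.
  have [x x_y] := equalizer_surj sob TX (eta_natural TX)
    (Tarr_natural HX TX _ (eta_natural HX)) a _ eq_y.
  by exists x; apply: Tcls_eq_eta.
apply: pointwise_equalizer.
- exact: eta_natural.
- by apply/eta_inj_preserves_mono.
- exact: eta_equalizes.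
- move=> a t; have [b [y ->]] := Tcls_surj t.
  by move/eta_equalized_fork/fork => [x ->]; exists x; rewrite eta_cls_lshift.
Qed.

End Sober.

(** * Nominal sets *)

Lemma fork_pullback {a b e} {Phi Psi : injm (a + b) e} :
  (forall i, Phi (lshift b i) = Psi (lshift b i)) ->
  (forall j j', Phi (rshift a j) <> Psi (rshift a j')) ->
  is_pb_Inj Phi Psi (lshm a b) (lshm a b).
Proof.
move=> l_eq r_disj; split=> [|d h' k' hk]; first exact: l_eq.
have : forall i, exists i1, k' i = lshift b i1 /\ h' i = lshift b i1.
  move=> i; case: (split_ordP (k' i)) => [i1 k'i|j' k'i].
    by exists i1; split=> //; apply: (injfunP Phi); rewrite hk k'i l_eq.
  move: (hk i); rewrite k'i; case: (split_ordP (h' i)) => [i0 ->|j ->].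
    by rewrite l_eq => /(injfunP Psi) /lshift_neq_rshift.
  by move/r_disj.
case/fin_all_exists => u u_k_h.
have u_inj : injective u.
  by move=> i i' u_ii'; apply: (injfunP k'); rewrite !(proj1 (u_k_h _)) u_ii'.
exists (Injm u u_inj); split=> [i|]; first by rewrite (proj2 (u_k_h i)).
split=> [i|u' u'_h _ i]; first by rewrite (proj1 (u_k_h i)).
by apply: (@lshift_inj a b); rewrite /= -lshmE u'_h (proj2 (u_k_h i)).
Qed.

Section Nominal.
Context {X : prefun}.

Lemma nominal_preserves_mono : nominal X -> preserves_mono X.
Proof.
move=> nom m n f x x' fxx'.
have pb : is_pb_Inj f f (idm m) (idm m).
  split=> // d h' k' hk; exists h'; split=> //.
  by split=> [i|u' u'_h _ i]; [apply: (injfunP f); rewrite hk | rewrite -u'_h].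
have [_ univ] := nom _ _ _ _ f f _ _ pb.
have [u [[u_x u_x'] _]] := univ unit (fun=> x) (fun=> x') (fun=> fxx').
by rewrite -(u_x tt) -(u_x' tt).
Qed.

Lemma nominal_fork_supported : nominal X -> fork_supported X.
Proof.
move=> nom a b y [e [Phi [Psi [l_eq [r_disj yy]]]]].
have [_ univ] := nom _ _ _ _ _ _ _ _ (fork_pullback l_eq r_disj).
have [u [[u_y _] _]] := univ unit (fun=> y) (fun=> y) (fun=> yy).
by exists (u tt); rewrite u_y.
Qed.

Hypotheses (HX : is_functor X) (mono : preserves_mono X) (fork : fork_supported X).

(* Reduce to [fork] by transport along a bijection [p + (a - p) = a] extending [h]. *)
Lemma fork_supported_along {p a e} (h : injm p a) (y : X a) (Phi Psi : injm a e) :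
  (forall i, Phi (h i) = Psi (h i)) ->
  (forall i i', (forall k, h k <> i) -> (forall k, h k <> i') -> Phi i <> Psi i') ->
  fmap X Phi y = fmap X Psi y -> exists w, y = fmap X h w.
Proof.
move=> h_eq off_h_disj yy.
have size_a : p + (a - p) = a by rewrite subnKC // (injm_leq h).
have [s s_h] := injm_extend (lshm p (a - p)) h (eq_leq size_a).
have [t [sK tK]] := injm_inverse s (eq_leq (esym size_a)).
have s_off_h j k : h k <> s (rshift p j).
  by rewrite -[h k]s_h => /(injfunP s) /lshift_neq_rshift.
have [|x tyE] := fork p (a - p) (fmap X t y).
  exists e, (compm Phi s), (compm Psi s); split; [|split] => [i|j j'|].
  - by rewrite !injmE -lshmE s_h.
  - by rewrite !injmE; apply: off_h_disj.
  - have tK' (F : injm a e) : compm (compm F s) t =1 F by move=> u; rewrite !injmE tK.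
    by rewrite -!(fmap_comp HX) !(fmap_ext X (tK' _)).
have st_id : compm s t =1 id by move=> u; rewrite compmE tK.
exists x; rewrite -(fmap_idE HX _ y st_id).
rewrite fmap_comp // tyE -fmap_comp //.
by apply: fmap_ext => i; rewrite compmE s_h.
Qed.

(* [y] is fixed by the fork [lshift \o f], [sort \o f], where [sort] keeps the
   image of [g] and moves the rest to a disjoint copy of [c]. *)
Lemma pullback_image {p a b c} {f : injm a c} {g : injm b c} {h : injm p a} {k : injm p b} :
  is_pb_Inj f g h k -> forall y z, fmap X f y = fmap X g z -> exists w, y = fmap X h w.
Proof.
move=> [fh_gk pb] y z yz.
pose in_g j := [exists i, g i == j].
pose sort j := if in_g j then lshift c j else rshift c j.
have sort_inj : injective sort.
  move=> j1 j2; rewrite /sort.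
  case: ifP => _; case: ifP => _.
  - exact: lshift_inj.
  - by move/lshift_neq_rshift.
  - by move/esym/lshift_neq_rshift.
  - exact: rshift_inj.
pose sortm := Injm sort sort_inj.
have sort_g j : sortm (g j) = lshift c (g j).
  by rewrite /= /sort ifT //; apply/existsP; exists j.
apply: (fork_supported_along h y (compm (lshm c c) f) (compm sortm f)).
- by move=> i; rewrite !injmE fh_gk sort_g.
- move=> i i' off_i off_i'; rewrite !injmE /= /sort.
  case: ifP => [/existsP [j /eqP gj] | _]; last exact: lshift_neq_rshift.
  move/lshift_inj/(injfunP f) => ii'; subst i'.
  have [u [u_h _]] := pb 1 (pointm i) (pointm j) (fun=> esym gj).
  exact: (off_i (u ord0) (u_h ord0)).
- rewrite !(fmap_comp HX) yz -!(fmap_comp HX).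
  by apply: fmap_ext => j; rewrite !injmE sort_g.
Qed.

Lemma mono_fork_nominal : nominal X.
Proof.
move=> p a b c f g h k pb; split=> [x|D h' k' hk'].
  by rewrite -!(fmap_comp HX); apply: fmap_ext => i; rewrite !injmE (proj1 pb).
have [u u_h] : exists u : D -> X p, forall d, fmap X h (u d) = h' d.
  apply: (choice (fun d w => fmap X h w = h' d)) => d.
  by have [w ->] := pullback_image pb _ _ (hk' d); exists w.
exists u; split=> [|u' [u'_h _]].
  split=> [//|d]; apply: (mono _ _ g); rewrite -hk' -u_h -!(fmap_comp HX).
  by apply: fmap_ext => i; rewrite !injmE (proj1 pb).
by apply: functional_extensionality => d; apply: (mono _ _ h); rewrite u_h u'_h.
Qed.

End Nominal.

Lemma nominal_char {X : prefun} : is_functor X ->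
  nominal X <-> preserves_mono X /\ fork_supported X.
Proof.
move=> HX; split=> [nom | [mono fork]].
  by split; [apply: nominal_preserves_mono | apply: nominal_fork_supported].
exact: mono_fork_nominal.
Qed.

(** * Idempotence of D *)

Lemma T_fork_supported (X : prefun) : is_functor X -> fork_supported (T X).
Proof.
move=> HX a b s [e [Phi [Psi [l_eq [r_disj]]]]]; have [d [x ->]] := Tcls_surj s.
rewrite /= !Tmap_cls // => /(Tcls_eqP HX) [e' [/= phi [psi [l_eq' xx]]]].
pose A := compm phi (summ Phi (idm d)); pose B := compm psi (summ Psi (idm d)).
have AB : fmap X A x = fmap X B x by rewrite !(fmap_comp HX).
have A_disj j m : compm A (compm (lshm (a + b) d) (rshm a b)) j <> compm A (rshm (a + b) d) m.
  by rewrite !injmE => /(injfunP phi) /lshift_neq_rshift.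
pose inner := copair A_disj.
have B_disj w v : compm B (lshm (a + b) d) w <> inner v.
  rewrite /inner /A /B; case: (split_ordP v) => [j ->|m ->]; rewrite !injmE -l_eq'.
    move/(injfunP phi)/lshift_inj; case: (split_ordP w) => [i ->|j' ->].
      by rewrite -l_eq => /(injfunP Phi) /lshift_neq_rshift.
    by move/esym; apply: r_disj.
  by move/(injfunP phi) /lshift_neq_rshift.
(* The witness declares the names of [b] bound. *)
exists (Tcls (@tpair X a (b + d) (fmap X (assocm a b d) x))).
rewrite /= Tmap_cls //; apply/(Tcls_eqP HX).
exists e', B, (copair B_disj); split=> [w|/=]; first by rewrite !injmE.
rewrite -AB -!(fmap_comp HX); apply: fmap_ext => u.
rewrite /inner /A /B; case: (split_ordP u) => [w ->|m ->]; rewrite !injmE //.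
by case: (split_ordP w) => [i ->|j ->]; rewrite !injmE // l_eq l_eq'.
Qed.

Lemma equalizer_mono_fork {E Y W : prefun} {e : forall a, E a -> Y a}
    {f g : forall a, Y a -> W a} :
  is_functor E -> is_functor Y -> is_equalizer e f g ->
  natural Y W f -> natural Y W g -> preserves_mono Y -> preserves_mono W ->
  fork_supported Y -> preserves_mono E /\ fork_supported E.
Proof.
move=> HE HY e_equalizer f_nat g_nat monoY monoW forkY.
have [e_nat [e_eq _]] := e_equalizer; have e_inj := equalizer_inj e_equalizer HE.
split=> [m n k x x' kxx' | a b y [c [Phi [Psi [l_eq [r_disj yy]]]]]].
  by apply: e_inj; apply: (monoY _ _ k); rewrite -!e_nat kxx'.
have [|w eyw] := forkY a b (e _ y).
  by exists c, Phi, Psi; do 2!split=> //; rewrite -!e_nat yy.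
have [|v ev] := equalizer_surj e_equalizer HY f_nat g_nat a w.
  by apply: (monoW _ _ (lshm a b)); rewrite -f_nat -g_nat -eyw e_eq.
by exists v; apply: e_inj; rewrite e_nat ev eyw.
Qed.

Lemma equalizer_sober {X DX : prefun} {th : forall a, DX a -> T X a} :
  is_functor X -> is_functor DX ->
  is_equalizer th (eta (X := T X)) (Tarr (eta (X := X))) -> sober DX.
Proof.
move=> HX HD th_equalizer; have TX := T_functor HX.
apply/sober_char => //; apply: (equalizer_mono_fork HD TX th_equalizer).
- exact: eta_natural.
- exact: Tarr_natural (eta_natural HX).
- by move=> m n f; apply: Tmap_inj.
- by move=> m n f; apply: Tmap_inj.
- exact: T_fork_supported.
Qed.

Theorem corollary9p7 :
  (forall X : prefun, is_functor X -> (sober X <-> nominal X)) /\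
  (forall X : prefun, is_functor X ->
   forall (DX : prefun) (th : forall a, DX a -> T X a),
     is_functor DX ->
     is_equalizer th (eta (X := T X)) (Tarr (eta (X := X))) ->
   forall (DDX : prefun) (th2 : forall a, DDX a -> T DX a),
     is_functor DDX ->
     is_equalizer th2 (eta (X := T DX)) (Tarr (eta (X := DX))) ->
   exists m : forall a, DDX a -> DX a,
     natural DDX DX m /\
     (forall a z, th a (m a z) = mu (Tarr th a (th2 a z))) /\
     is_iso m).
Proof.
split=> [X HX | X HX DX th HD th_equalizer DDX th2 HDD th2_equalizer].
  exact: iff_trans (sober_char HX) (iff_sym (nominal_char HX)).
have [th_nat _] := th_equalizer.
have [m [m_nat [eta_m m_iso]]] :=
  equalizer_iso HDD HD th2_equalizer (equalizer_sober HX HD th_equalizer).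
exists m; do 2!split=> //; move=> a z.
by rewrite -eta_m (Tarr_eta th_nat) (mu_eta HX).
Qed.
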